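(* Let $k\ge2$ be an integer, $g(z)=z^3-z^2+7z+1$, and $\Gamma_k(t)=\Psi_k(g(t))$. Let $A=\{z\in\mathbb{C}:\Re z\le0,\ |g(z)|=1\}$ and $B=\{z\in\mathbb{C}:\Re z>0,\ |g(z)|=1\}$. Then $\Gamma_k$ has exactly $\varphi(k)$ roots in $A$ and exactly $2\varphi(k)$ roots in $B$.
   Context: $\Psi_k$ is the $k$-th cyclotomic polynomial and $\varphi$ is Euler's totient function. *)

From HB Require Import structures.
From mathcomp Require Import all_boot all_order all_algebra all_field.
Set Implicit Arguments. Unset Strict Implicit. Unset Printing Implicit Defensive.
Import Order.TTheory GRing.Theory Num.Theory.
Local Open Scope ring_scope.

(* ℂ is modelled by the algebraically closed field algC. *)
Definition gpoly : {poly algC} := 'X^3 - 'X^2 + 7%:R *: 'X + 1.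

(* Γ_k(t) = Ψ_k(g(t)), with Ψ_k the k-th cyclotomic polynomial 'Phi_k. *)
Definition Gamma (k : nat) : {poly algC} :=
  (map_poly intr 'Phi_k) \Po gpoly.

Definition setA : pred algC := fun z => ('Re z <= 0) && (`|gpoly.[z]| == 1).
Definition setB : pred algC := fun z => (0 < 'Re z) && (`|gpoly.[z]| == 1).

(* Since Psi_k is the product of the X - zeta over the primitive k-th roots of
   unity zeta, Gamma_k is the product of the cubics g - zeta, and it suffices to
   show that for |c| = 1 the three roots of g - c split as one in A and two in B.
   If |g(r)| = 1 then |r| |r^2 - r + 7| = |g(r) - 1| <= 2, which forces
   |r| <= 1/3 or |r| >= 2; as the product of the roots has modulus |1 - c| <= 2,
   some root a is small.  Writing r = x + iy, Re g(r) - 1 = x (x^2 - x + 7) +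
   y^2 (1 - 3x), so a small root has Re a <= 0.  The two other roots b, d satisfy
   b + d = 1 - a and (b - d)^2 = -27 + 2a - 3a^2, a number close to -27, so
   Re (b - d) is tiny and Re b, Re d are close to (1 - Re a) / 2 > 0. *)

From HB Require Import structures.
From mathcomp Require Import all_boot all_order all_algebra all_field.
From mathcomp Require Import ring lra.
Import Order.TTheory GRing.Theory Num.Theory.
Local Open Scope ring_scope.

(* These inequalities are used at [R := algR]: the operations of [algR] compute
   to those of [algC], so their instances are accepted by conversion on real
   elements of [algC]. *)
Section RealInequalities.
Variable R : realFieldType.

Lemma cubic_gap (t h : R) :
  0 <= t -> 0 <= h -> 7 <= h + t + t ^+ 2 -> t * h <= 2 -> 3 * t <= 1 \/ 2 <= t.
Proof.
move=> t0 h0 h7 th2; have [|t_lt2] := lerP 2 t; [by right | left].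
have : (2 - t) * (t ^+ 2 + 3 * t - 1) <= 0 by nra.
nra.
Qed.

Lemma Re_gpoly_gt1 (x y : R) : 0 < x -> 3 * x <= 1 ->
  1 < x ^+ 3 - 3 * x * y ^+ 2 - x ^+ 2 + y ^+ 2 + 7 * x + 1.
Proof. by move=> *; nra. Qed.

Lemma sqrt_disc_bound (x y p q : R) :
    9 * (x ^+ 2 + y ^+ 2) <= 1 ->
    p ^+ 2 - q ^+ 2 = -27 + 2 * x - 3 * x ^+ 2 + 3 * y ^+ 2 ->
    2 * p * q = 2 * y - 6 * x * y ->
  `|p| < 1 - x.
Proof.
move=> xy_small re_eq im_eq.
have q2_ge : 26 <= q ^+ 2 by nra.
have x_bd : -1 <= 3 * x <= 1 by apply/andP; split; nra.
have pq2_le : (p * q) ^+ 2 <= 4 / 9.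
  have y2 : 9 * y ^+ 2 <= 1 by nra.
  have x2 : (1 - 3 * x) ^+ 2 <= 4 by nra.
  rewrite (_ : p * q = y * (1 - 3 * x)); last by lra.
  rewrite exprMn; nra.
have p2_le : 50 * p ^+ 2 <= 1 by rewrite exprMn in pq2_le; nra.
rewrite -(ltr_pXn2r (n := 2)) // ?nnegrE ?normr_ge0 //; last by lra.
rewrite real_normK ?num_real //; nra.
Qed.

End RealInequalities.

Lemma Crect_inj (C : numClosedFieldType) (p q r s : C) :
    p \is Num.real -> q \is Num.real -> r \is Num.real -> s \is Num.real ->
  p + 'i * q = r + 'i * s -> p = r /\ q = s.
Proof.
move=> pR qR rR sR e.
by split; [rewrite -(Re_rect pR qR) e Re_rect | rewrite -(Im_rect pR qR) e Im_rect].
Qed.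

Lemma sqrC_rect (C : numClosedFieldType) (x y : C) :
  (x + 'i * y) ^+ 2 = x ^+ 2 - y ^+ 2 + 'i * (2 * x * y).
Proof. by rewrite expr2 mulC_rect; congr (_ + 'i * _); ring. Qed.

Lemma prod_XsubC3 (R : comNzRingType) (a b d : R) :
  \prod_(r <- [:: a; b; d]) ('X - r%:P) =
  'X^3 - (a + b + d)%:P * 'X^2 + (a * b + a * d + b * d)%:P * 'X - (a * b * d)%:P.
Proof. by rewrite !big_cons big_nil !polyCD !polyCM; ring. Qed.

Lemma norm_prim_root (R : numDomainType) n (w : R) : n.-primitive_root w -> `|w| = 1.
Proof.
move=> prim_w; apply/eqP; rewrite -(pexpr_eq1 (prim_order_gt0 prim_w)) ?normr_ge0 //.
by rewrite -normrX (prim_expr_order prim_w) normr1.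
Qed.

Ltac real_closure := repeat first
  [ assumption | exact: real1 | exact: realn | rewrite realN
  | apply: realD | apply: realM | apply: realX ].

Lemma horner_gpoly z : gpoly.[z] = z ^+ 3 - z ^+ 2 + 7 * z + 1.
Proof. by rewrite /gpoly !hornerE. Qed.

Lemma Re_gpoly_rect x y : x \is Creal -> y \is Creal ->
  'Re gpoly.[x + 'i * y] = x ^+ 3 - 3 * x * y ^+ 2 - x ^+ 2 + y ^+ 2 + 7 * x + 1.
Proof.
move=> xR yR; rewrite horner_gpoly.
(* [ring] does not know 'i ^+ 2 = -1, hence the multiple of 'i ^+ 2 + 1. *)
rewrite (_ : (x + 'i * y) ^+ 3 - (x + 'i * y) ^+ 2 + 7 * (x + 'i * y) + 1
   = x ^+ 3 - 3 * x * y ^+ 2 - x ^+ 2 + y ^+ 2 + 7 * x + 1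
   + 'i * (3 * x ^+ 2 * y - y ^+ 3 - 2 * x * y + 7 * y)
   + ('i ^+ 2 + 1) * (3 * x * y ^+ 2 + 'i * y ^+ 3 - y ^+ 2)); last by ring.
by rewrite sqrCi addNr mul0r addr0 Re_rect //; real_closure.
Qed.

Lemma norm_gpoly_eq1_gap {r : algC} : `|gpoly.[r]| = 1 -> 3 * `|r| <= 1 \/ 2 <= `|r|.
Proof.
rewrite horner_gpoly => g1.
set h := r ^+ 2 - r + 7.
have rh_le2 : `|r| * `|h| <= 2.
  rewrite -normrM (_ : r * h = r ^+ 3 - r ^+ 2 + 7 * r + 1 - 1); last by rewrite /h; ring.
  by apply: le_trans (ler_normB _ _) _; rewrite g1 normr1.
have h_ge7 : 7 <= `|h| + `|r| + `|r| ^+ 2.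
  rewrite -addrA -normrX -[7](normr_nat algC 7) (_ : 7%:R = h + (r - r ^+ 2)); last first.
    by rewrite /h; ring.
  by apply: le_trans (ler_normD _ _) _; rewrite lerD2l ler_normB.
exact: (@cubic_gap algR (in_algR (normr_real r)) (in_algR (normr_real h))
  (normr_ge0 r) (normr_ge0 h) h_ge7 rh_le2).
Qed.

Lemma small_root_Re_le0 {r : algC} : `|gpoly.[r]| = 1 -> 3 * `|r| <= 1 -> 'Re r <= 0.
Proof.
move=> g1 r_small; have [//|Re_gt0] := real_leP (Creal_Re r) (real0 _).
have Re_le : 3 * 'Re r <= 1.
  by apply: le_trans r_small; rewrite ler_wpM2l // (leif_Re_Creal r).1.
have := (leif_Re_Creal gpoly.[r]).1.
rewrite g1 {1}[r]Crect Re_gpoly_rect ?Creal_Re ?Creal_Im // lt_geF //.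
exact: (@Re_gpoly_gt1 algR (in_algR (Creal_Re r)) (in_algR (Creal_Im r)) Re_gt0 Re_le).
Qed.

Lemma Re_sqrt_disc_lt {a w : algC} :
  3 * `|a| <= 1 -> w ^+ 2 = -27 + 2 * a - 3 * a ^+ 2 -> `|'Re w| < 1 - 'Re a.
Proof.
move=> a_small w2.
set x := 'Re a; set y := 'Im a; set p := 'Re w; set q := 'Im w.
have xR : x \is Creal := Creal_Re a; have yR : y \is Creal := Creal_Im a.
have pR : p \is Creal := Creal_Re w; have qR : q \is Creal := Creal_Im w.
have [re_eq im_eq] : p ^+ 2 - q ^+ 2 = -27 + 2 * x - 3 * x ^+ 2 + 3 * y ^+ 2 /\
                     2 * p * q = 2 * y - 6 * x * y.
  apply: Crect_inj; last first.
    by rewrite -sqrC_rect -Crect w2 [a]Crect sqrC_rect -/x -/y; ring.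
  all: real_closure.
have a_small2 : 9 * (x ^+ 2 + y ^+ 2) <= 1.
  rewrite -normC2_Re_Im (_ : 9 * _ = (3 * `|a|) ^+ 2); last by ring.
  by rewrite exprn_ile1 ?mulr_ge0.
apply: (@sqrt_disc_bound algR (in_algR xR) (in_algR yR) (in_algR pR) (in_algR qR) a_small2);
  apply: val_inj; [exact: re_eq | exact: im_eq].
Qed.

Lemma other_roots_Re_gt0 {a b d : algC} :
    3 * `|a| <= 1 -> a + b + d = 1 -> a * b + a * d + b * d = 7 ->
  0 < 'Re b /\ 0 < 'Re d.
Proof.
move=> a_small sum1 sum2.
(* (b - d)^2 = (b + d)^2 - 4 b d with b + d = 1 - a and b d = 7 - a (b + d) *)
have disc : (b - d) ^+ 2 = -27 + 2 * a - 3 * a ^+ 2.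
  apply/eqP; rewrite -subr_eq0 (_ : _ - _ = (a + b + d - 1) * (a + b + d + 1 + 2 * a)
      - 4 * (a * b + a * d + b * d - 7)); last by ring.
  by rewrite sum1 sum2 !subrr mul0r mulr0 subr0.
have := Re_sqrt_disc_lt a_small disc.
set x := 'Re a; set y := 'Im a; set p := 'Re (b - d); set q := 'Im (b - d).
rewrite real_ltr_norml ?Creal_Re // => /andP[Np_lt p_lt].
have b2 : b *+ 2 = 1 - x + p + 'i * (q - y).
  rewrite (_ : 1 - x + p + 'i * (q - y) = 1 - (x + 'i * y) + (p + 'i * q)); last by ring.
  by rewrite -[x + _]Crect -[p + _]Crect -sum1; ring.
have d2 : d *+ 2 = 1 - x - p + 'i * (- q - y).
  rewrite (_ : 1 - x - p + 'i * (- q - y) = 1 - (x + 'i * y) - (p + 'i * q)); last by ring.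
  by rewrite -[x + _]Crect -[p + _]Crect -sum1; ring.
have [xR yR] : x \is Creal /\ y \is Creal by split; [exact: Creal_Re | exact: Creal_Im].
have [pR qR] : p \is Creal /\ q \is Creal by split; [exact: Creal_Re | exact: Creal_Im].
have Re_2b : 'Re b *+ 2 = 1 - x + p by rewrite -raddfMn /= b2 Re_rect //; real_closure.
have Re_2d : 'Re d *+ 2 = 1 - x - p by rewrite -raddfMn /= d2 Re_rect //; real_closure.
split; rewrite -(pmulrn_lgt0 _ (isT : (0 < 2)%N)).
  by rewrite Re_2b addrC -[1 - x]opprK subr_gt0.
by rewrite Re_2d subr_gt0.
Qed.

Lemma size_gpoly_subC (c : algC) : size (gpoly - c%:P) = 4%N.
Proof.
by rewrite /gpoly !size_addl ?size_opp ?size_scale ?size_polyXn ?size_polyX ?size_polyC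
  ?pnatr_eq0 //; case: (_ != 0).
Qed.

Lemma lead_coef_gpoly_subC (c : algC) : lead_coef (gpoly - c%:P) = 1.
Proof. by rewrite lead_coefE size_gpoly_subC /gpoly !coefE /= !(mulr0, subr0, addr0). Qed.

Lemma Vieta_gpoly_subC {c a b d : algC} :
    gpoly - c%:P = \prod_(r <- [:: a; b; d]) ('X - r%:P) ->
  a + b + d = 1 /\ a * b + a * d + b * d = 7.
Proof.
rewrite prod_XsubC3 => e; have coef i := congr1 (fun p : {poly algC} => p`_i) e.
move: (coef 2%N) (coef 1%N); rewrite /gpoly !coefE /=.
by rewrite !(mul0r, mulr0, mulr1, sub0r, subr0, oppr0, add0r, addr0) => /oppr_inj<- <-.
Qed.

Section GpolySubCRoots.

Variables (c : algC) (rs : seq algC).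
Hypothesis c_norm1 : `|c| = 1.
Hypothesis gpoly_subC_prod : gpoly - c%:P = \prod_(r <- rs) ('X - r%:P).

Lemma size_gpoly_subC_roots : size rs = 3%N.
Proof. by have := size_gpoly_subC c; rewrite gpoly_subC_prod size_prod_XsubC => -[]. Qed.

Lemma norm_gpoly_subC_root : {in rs, forall r, `|gpoly.[r]| = 1}.
Proof.
move=> r; rewrite -root_prod_XsubC -gpoly_subC_prod => /rootP/eqP.
by rewrite hornerD hornerN hornerC subr_eq0 => /eqP ->.
Qed.

Lemma gpoly_subC_has_small_root : has (fun r => 3 * `|r| <= 1) rs.
Proof.
apply/contraT; rewrite -all_predC => /allP /= large.
have r_ge2 r : r \in rs -> 2 <= `|r|.
  move=> r_rs; have /norm_gpoly_eq1_gap[r_small|//] := norm_gpoly_subC_root r r_rs.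
  by have := large r r_rs; rewrite r_small.
have prod_norm : \prod_(r <- rs) `|r| = `|1 - c|.
  have := congr1 (fun p => `|p.[0]|) gpoly_subC_prod.
  rewrite /= hornerD hornerN hornerC horner_gpoly horner_prod normr_prod.
  under eq_bigr do rewrite hornerXsubC sub0r normrN.
  by rewrite !expr0n /= mulr0 subr0 !add0r => ->.
have : \prod_(r <- rs) 2 <= \prod_(r <- rs) `|r| :> algC.
  by rewrite !big_seq; apply: ler_prod => r r_rs; rewrite ler0n r_ge2.
rewrite big_const_seq count_predT iter_mulr_1 size_gpoly_subC_roots prod_norm.
move/le_trans/(_ (ler_normB 1 c)); rewrite normr1 c_norm1.
by rewrite -natrX (_ : 1 + 1 = 2%:R) // ler_nat.
Qed.

Lemma count_gpoly_subC_roots : count setA rs = 1%N /\ count setB rs = 2%N.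
Proof.
have /hasP[a a_rs a_small] := gpoly_subC_has_small_root.
have rs_perm := perm_to_rem a_rs.
have g1 : {in a :: rem a rs, forall r, `|gpoly.[r]| = 1}.
  by move=> r; rewrite -(perm_mem rs_perm); exact: norm_gpoly_subC_root.
have := gpoly_subC_prod; rewrite (perm_big _ rs_perm).
have := size_gpoly_subC_roots; rewrite (perm_size rs_perm) !(permP rs_perm).
case: (rem a rs) g1 => [|b [|d []]] // g1 _ /Vieta_gpoly_subC[sum1 sum2].
have [Re_b Re_d] := other_roots_Re_gt0 a_small sum1 sum2.
have Re_a := small_root_Re_le0 (g1 a (mem_head _ _)) a_small.
rewrite /= /setA /setB !g1 ?inE ?eqxx ?orbT //.
by rewrite Re_a (le_gtF Re_a) (lt_geF Re_b) (lt_geF Re_d) Re_b Re_d.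
Qed.

End GpolySubCRoots.

Lemma prod_gpoly_subC_roots {cs : seq algC} : {in cs, forall c, `|c| = 1} ->
  exists rs : seq algC,
    \prod_(c <- cs) (gpoly - c%:P) = \prod_(r <- rs) ('X - r%:P) /\
    count setA rs = size cs /\ count setB rs = (2 * size cs)%N.
Proof.
elim: cs => [|c cs IHcs] cs_norm1; first by exists [::]; rewrite !big_nil.
have [|rs [cs_rs [csA csB]]] := IHcs.
  by move=> z z_cs; apply: cs_norm1; rewrite inE z_cs orbT.
have [rc c_rc] := closed_field_poly_normal (gpoly - c%:P).
rewrite lead_coef_gpoly_subC scale1r in c_rc.
have [cA cB] := count_gpoly_subC_roots c rc (cs_norm1 c (mem_head _ _)) c_rc.
exists (rc ++ rs); rewrite big_cons big_cat /= -c_rc cs_rs.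
by rewrite !count_cat cA cB csA csB mulnS.
Qed.

Theorem proposition3p8 (k : nat) (hk : (2 <= k)%N) :
  exists rs : seq algC,
    Gamma k = \prod_(r <- rs) ('X - r%:P) /\
    count setA rs = totient k /\
    count setB rs = (2 * totient k)%N.
Proof.
have [z prim_z] := C_prim_root_exists (ltnW hk).
have [cs cycl_cs] := closed_field_poly_normal (cyclotomic z k).
rewrite (monicP (cyclotomic_monic z k)) scale1r in cycl_cs.
have size_cs : size cs = totient k.
  by have := size_cyclotomic z k; rewrite cycl_cs size_prod_XsubC => -[].
have cs_norm1 : {in cs, forall c, `|c| = 1}.
  move=> c; rewrite -root_prod_XsubC -cycl_cs (root_cyclotomic prim_z).
  exact: norm_prim_root.
have [rs [Gamma_rs [csA csB]]] := prod_gpoly_subC_roots cs_norm1.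
exists rs; rewrite -size_cs -Gamma_rs /Gamma (Cintr_Cyclotomic prim_z) cycl_cs.
rewrite rmorph_prod; split=> //; apply: eq_bigr => c _.
by rewrite /= comp_polyB comp_polyX comp_polyC.
Qed.
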